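(* Let $X$ be a vector space, let $0<\beta\le1$, and let $Y$ be a $\beta$-homogeneous complex Banach space with $F$-norm $\|\cdot\|$. Let $\varepsilon>0$ and let $\phi: X\to Y$ be a mapping with $\phi(0)=0$ and $$\big\|\phi(x+y-z)+\phi(x+z-y)+\phi(y+z-x)-\phi(x-y)-\phi(x-z)-\phi(z-y)-\phi(x)-\phi(y)-\phi(z)\big\|\le\varepsilon$$ for all $x,y,z\in X$. Then there exists a unique quadratic mapping $h: X\to Y$ such that $$\|\phi(x)-h(x)\|\le\frac{\varepsilon}{4^\beta-1}\quad\text{for all }x\in X.$$
   Context: An $F$-norm on a complex linear space $Y$ is a map $\|\cdot\|: Y\to[0,\infty)$ such that: $\|u\|=0$ iff $u=0$; $\|\lambda u\|=\|u\|$ whenever $|\lambda|=1$; $\|u+v\|\le\|u\|+\|v\|$; $\|\lambda_n u\|\to0$ implies $\lambda_n\to0$; $\|\lambda u_n\|\to 0$ implies $u_n\to0$. With $d(u,v)=\|u-v\|$, $Y$ is an $F$-space if $d$ is complete. The $F$-norm is $\beta$-homogeneous ($\beta>0$) if $\|\lambda u\|=|\lambda|^\beta\|u\|$ for all $u\in Y$, $\lambda\in\mathbb{C}$; a $\beta$-homogeneous Banach space is a $\beta$-homogeneous $F$-space. A mapping $h: X\to Y$ is quadratic if $h(x+y)+h(x-y)=2h(x)+2h(y)$ for all $x,y\in X$. *)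

From HB Require Import structures.
From mathcomp Require Import all_boot all_order all_algebra.
From mathcomp Require Import all_classical all_reals all_analysis.
From mathcomp Require Import complex.
Set Implicit Arguments. Unset Strict Implicit. Unset Printing Implicit Defensive.
Import Order.TTheory GRing.Theory Num.Theory numFieldNormedType.Exports.
Local Open Scope ring_scope.
Local Open Scope classical_set_scope.

Definition cmod (R : realType) (z : complex R) : R :=
  Num.sqrt (complex.Re z ^+ 2 + complex.Im z ^+ 2).

Definition is_Fnorm (R : realType) (Y : lmodType (complex R)) (nrm : Y -> R) : Prop :=
  [/\ (forall u, nrm u = 0 <-> u = 0),
      (forall (l : complex R) u, cmod l = 1 -> nrm (l *: u) = nrm u),
      (forall u v, nrm (u + v) <= nrm u + nrm v),
      (forall (l : nat -> complex R) u, u <> 0 ->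
          (fun n : nat => nrm (l n *: u)) @ \oo --> (0 : R) ->
          (fun n : nat => cmod (l n)) @ \oo --> (0 : R)) &
      (forall (l : complex R) (u : nat -> Y), l <> 0 ->
          (fun n : nat => nrm (l *: u n)) @ \oo --> (0 : R) ->
          (fun n : nat => nrm (u n)) @ \oo --> (0 : R))].

Definition Fcomplete (R : realType) (Y : lmodType (complex R)) (nrm : Y -> R) : Prop :=
  forall u : nat -> Y,
    (forall e : R, 0 < e -> exists N : nat, forall m n : nat,
        (N <= m)%N -> (N <= n)%N -> nrm (u m - u n) < e) ->
    exists v : Y, (fun n : nat => nrm (u n - v)) @ \oo --> (0 : R).

Definition beta_homogeneous (R : realType) (Y : lmodType (complex R))
  (nrm : Y -> R) (beta : R) : Prop :=
  forall (l : complex R) (u : Y), nrm (l *: u) = (cmod l) `^ beta * nrm u.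

Definition beta_homogeneous_Banach (R : realType) (Y : lmodType (complex R))
  (nrm : Y -> R) (beta : R) : Prop :=
  [/\ 0 < beta, is_Fnorm nrm, Fcomplete nrm & beta_homogeneous nrm beta].

Definition quadratic (X Y : zmodType) (h : X -> Y) : Prop :=
  forall x y : X, h (x + y) + h (x - y) = h x *+ 2 + h y *+ 2.

From HB Require Import structures.
From mathcomp Require Import all_boot all_order all_algebra.
From mathcomp Require Import all_classical all_reals all_analysis.
From mathcomp Require Import complex ring.
Import Order.TTheory GRing.Theory Num.Theory numFieldNormedType.Exports.
Local Open Scope ring_scope.
Local Open Scope classical_set_scope.
Set Implicit Arguments. Unset Strict Implicit. Unset Printing Implicit Defensive.

(* Putting y = 0 and z = x in the functional inequality gives ||phi(2x) - 4 phi(x)|| <= eps, so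
   h(x) := lim 4^-n phi(2^n x) exists by completeness and beta-homogeneity: consecutive terms
   differ by at most eps 4^(-beta (n+1)), whose tail sum from 0 is eps / (4^beta - 1).  Three
   instances of the inequality bound the quadratic defect of phi by 3 eps, hence that of the
   n-th term by 3 eps 4^(-beta n), so h is quadratic.  A quadratic map D satisfies D(x) = D(2x)/4;
   if moreover D is bounded then ||D x|| <= 4^(-beta n) sup ||D||, which forces uniqueness. *)

Section Defects.
Variables (X Y : zmodType).
Implicit Types (f g : X -> Y) (x y z : X).

Definition quad_defect f x y := f (x + y) + f (x - y) - f x *+ 2 - f y *+ 2.

Definition triple_defect f x y z :=
  f (x + y - z) + f (x + z - y) + f (y + z - x)
  - f (x - y) - f (x - z) - f (z - y) - f x - f y - f z.

Lemma quadraticP f : quadratic f <-> forall x y, quad_defect f x y = 0.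
Proof.
split=> fq x y; first by rewrite /quad_defect -addrA -opprD fq subrr.
by apply/eqP; rewrite -subr_eq0 opprD addrA; apply/eqP/fq.
Qed.

Lemma quad_defectB f g x y :
  quad_defect (fun z => f z - g z) x y = quad_defect f x y - quad_defect g x y.
Proof.
rewrite /quad_defect !mulrnBl !opprD !opprK !addrA.
by rewrite [LHS](@GRing.add Y).[ACl 1*3*5*6*9*10*2*4*7*8*11*12].
Qed.

Lemma quadraticB f g : quadratic f -> quadratic g -> quadratic (fun z => f z - g z).
Proof.
move=> /quadraticP fq /quadraticP gq; apply/quadraticP => x y.
by rewrite quad_defectB fq gq subrr.
Qed.

Lemma triple_defect_0x0 f x : f 0 = 0 -> triple_defect f 0 x 0 = f x - f (- x).
Proof.
move=> f0; rewrite /triple_defect !(addr0, add0r, subr0, sub0r, oppr0, f0).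
by rewrite (addrAC (f x)) addrK (addrAC _ (- f (- x))) addrK.
Qed.

Lemma triple_defect_x0x f x : f 0 = 0 -> triple_defect f x 0 x = f (x + x) - f x *+ 4.
Proof.
move=> f0; rewrite /triple_defect !(addr0, add0r, subr0, sub0r, subrr, f0).
by rewrite !mulrS mulr0n addr0 !opprD !addrA.
Qed.

Lemma quad_defect_triple f x y : f 0 = 0 ->
  quad_defect f x y =
  triple_defect f x y 0 + triple_defect f 0 (x - y) 0 - triple_defect f 0 y 0.
Proof.
move=> f0; rewrite !triple_defect_0x0 // opprB /quad_defect /triple_defect.
rewrite !(addr0, subr0, sub0r, f0) !mulr2n !opprD !opprK !addrA.
by rewrite [RHS](@GRing.add Y).[ACl (1*9)*((3*10)*((2*4)*(12*6)))*5*7*8*11] !subrr !addr0.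
Qed.

End Defects.

Lemma ler_cvg0 (R : realFieldType) (a : nat -> R) (b c : R) :
  a @ \oo --> 0 -> (forall n, c <= b + a n) -> c <= b.
Proof.
move=> a0 cle; rewrite -[b]addr0.
by apply: (ler_cvg_to (cvg_cst c) (cvgD (cvg_cst b) a0)); apply: nearW.
Qed.

Definition quarterC (R : realType) : complex R := ((4 : R)^-1)%:C%C.

Lemma scale_quarterC_mul4 (R : realType) (Y : lmodType (complex R)) (u : Y) :
  quarterC R *: (u *+ 4) = u.
Proof.
rewrite -scaler_nat scalerA /quarterC -(rmorph_nat (real_complex R)) -rmorphM.
by rewrite mulVf // rmorph1 scale1r.
Qed.

(* [hyers_seq phi n x = 4^-n phi (2^n x)], the approximating sequence of Hyers' direct method. *)
Fixpoint hyers_seq (R : realType) (X : zmodType) (Y : lmodType (complex R))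
    (phi : X -> Y) (n : nat) (x : X) : Y :=
  if n is n'.+1 then quarterC R *: hyers_seq phi n' (x + x) else phi x.

Lemma hyers_seqS (R : realType) (X : zmodType) (Y : lmodType (complex R))
    (phi : X -> Y) n x :
  hyers_seq phi n.+1 x = quarterC R *: hyers_seq phi n (x + x).
Proof. by []. Qed.

Lemma quad_defect_hyers_seqS (R : realType) (X : zmodType)
    (Y : lmodType (complex R)) (phi : X -> Y) n x y :
  quad_defect (hyers_seq phi n.+1) x y =
  quarterC R *: quad_defect (hyers_seq phi n) (x + x) (y + y).
Proof.
rewrite /quad_defect !hyers_seqS !scalerBr scalerDr -!scalerMnr (addrACA x y).
by rewrite (addrACA x (- y)) -opprD.
Qed.

Section BetaHomogeneousNorm.
Variables (R : realType) (Y : lmodType (complex R)) (nrm : Y -> R) (beta : R).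
Hypotheses (nrm_eq0 : forall u, nrm u = 0 <-> u = 0)
  (nrm_triangle : forall u v, nrm (u + v) <= nrm u + nrm v)
  (nrm_hom : beta_homogeneous nrm beta) (beta_gt0 : 0 < beta).

Local Notation q := ((4 : R) `^ beta)^-1.

Lemma cmod_real (r : R) : 0 <= r -> cmod r%:C%C = r.
Proof. by move=> r0; rewrite /cmod /= expr0n addr0 sqrtr_sqr ger0_norm. Qed.

Lemma nrmN u : nrm (- u) = nrm u.
Proof.
rewrite -scaleN1r nrm_hom /cmod /= oppr0 expr0n addr0 sqrtr_sqr normrN normr1.
by rewrite powR1 mul1r.
Qed.

Lemma nrm0 : nrm 0 = 0.
Proof. exact/nrm_eq0. Qed.

Lemma nrm_ge0 u : 0 <= nrm u.
Proof.
have := nrm_triangle u (- u); rewrite subrr nrmN nrm0.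
by rewrite -mulr2n pmulrn_lge0.
Qed.

Lemma nrmBC u v : nrm (u - v) = nrm (v - u).
Proof. by rewrite -opprB nrmN. Qed.

Lemma nrmB_le u v : nrm (u - v) <= nrm u + nrm v.
Proof. by rewrite -(nrmN v); apply: nrm_triangle. Qed.

Lemma nrm_mulr2n_le u : nrm (u *+ 2) <= nrm u *+ 2.
Proof. by rewrite !mulr2n. Qed.

Lemma nrm_le0 u : nrm u <= 0 -> u = 0.
Proof. by move=> u_le0; apply/nrm_eq0/eqP; rewrite eq_le u_le0 nrm_ge0. Qed.

Lemma eq0_of_nrm_le_cvg0 (a : nat -> R) u :
  a @ \oo --> 0 -> (forall n, nrm u <= a n) -> u = 0.
Proof. by move=> a0 ua; apply/nrm_le0/(ler_cvg0 a0) => n; rewrite add0r. Qed.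

Lemma pow4_gt1 : 1 < 4 `^ beta.
Proof.
have := @gt0_ltr_powR R beta beta_gt0 1 4; rewrite powR1; apply; rewrite ?nnegrE //.
by rewrite ltr1n.
Qed.

Lemma q_gt0 : 0 < q.
Proof. by rewrite invr_gt0 (lt_trans ltr01 pow4_gt1). Qed.

Lemma q_lt1 : q < 1.
Proof. by rewrite invf_lt1 ?pow4_gt1 // (lt_trans ltr01 pow4_gt1). Qed.

Lemma cvg_geometric_q (M : R) : (fun n => M * q ^+ n) @ \oo --> 0.
Proof. by apply: cvg_geometric; rewrite ger0_norm ?q_lt1 ?(ltW q_gt0). Qed.

Lemma nrm_scale_quarterC u : nrm (quarterC R *: u) = q * nrm u.
Proof.
rewrite nrm_hom cmod_real ?invr_ge0 //; congr (_ * _).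
by rewrite -(@powR_inv1 R 4) // -powRrM mulN1r powRN.
Qed.

Section NormedDefects.
Variables (X : zmodType) (f : X -> Y).

Lemma nrm_quad_defect_le x y :
  nrm (quad_defect f x y) <=
  nrm (f (x + y)) + nrm (f (x - y)) + nrm (f x) *+ 2 + nrm (f y) *+ 2.
Proof.
apply: (le_trans (nrmB_le _ _)); apply: lerD; last exact: nrm_mulr2n_le.
apply: (le_trans (nrmB_le _ _)); apply: lerD; [exact: nrm_triangle | exact: nrm_mulr2n_le].
Qed.

Lemma nrm_quad_defect_triple_le (eps : R) x y : f 0 = 0 ->
  (forall x y z, nrm (triple_defect f x y z) <= eps) ->
  nrm (quad_defect f x y) <= eps *+ 3.
Proof.
move=> f0 f_triple; rewrite quad_defect_triple // !mulrSr mulr0n add0r.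
apply: (le_trans (nrmB_le _ _)); apply: lerD => //.
by apply: (le_trans (nrm_triangle _ _)); apply: lerD.
Qed.

Lemma quadratic_bounded_eq0 (M : R) : quadratic f ->
  (forall x, nrm (f x) <= M) -> forall x, f x = 0.
Proof.
move=> fq f_bounded.
have f0 : f 0 = 0.
  have := fq 0 0; rewrite addr0 subr0 -mulr2n -[LHS]addr0 => /addrI/esym f02.
  by rewrite -(scale_quarterC_mul4 (f 0)) (mulrnA _ 2 2) f02 mul0rn scaler0.
have f_half x : f x = quarterC R *: f (x + x).
  by have := fq x x; rewrite subrr f0 addr0 -mulrnDr => ->; rewrite scale_quarterC_mul4.
have f_geo n x : nrm (f x) <= M * q ^+ n.
  elim: n x => [|n IHn] x; first by rewrite expr0 mulr1.
  by rewrite f_half nrm_scale_quarterC exprS mulrCA ler_wpM2l ?(ltW q_gt0).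
by move=> x; apply: (eq0_of_nrm_le_cvg0 (cvg_geometric_q M)).
Qed.

End NormedDefects.

Section HyersSequence.
Variables (X : zmodType) (phi : X -> Y) (eps : R).
Hypothesis phi_double : forall x, nrm (phi (x + x) - phi x *+ 4) <= eps.

Local Notation K := (eps / (4 `^ beta - 1)).

Lemma hyers_seq_step n x :
  nrm (hyers_seq phi n x - hyers_seq phi n.+1 x) <= eps * q ^+ n.+1.
Proof.
elim: n x => [|n IHn] x.
  rewrite /= -{1}(scale_quarterC_mul4 (phi x)) -scalerBr.
  by rewrite nrm_scale_quarterC nrmBC expr1 [leRHS]mulrC ler_wpM2l ?(ltW q_gt0).
rewrite [hyers_seq _ n.+1 x]hyers_seqS [hyers_seq _ n.+2 x]hyers_seqS -scalerBr.
by rewrite nrm_scale_quarterC exprS mulrCA ler_wpM2l ?(ltW q_gt0).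
Qed.

Lemma hyers_seq_telescope n k x :
  nrm (hyers_seq phi n x - hyers_seq phi (n + k) x) <= K * (q ^+ n - q ^+ (n + k)).
Proof.
elim: k => [|k IHk]; first by rewrite addn0 !subrr nrm0 mulr0.
have P1 : 4 `^ beta - 1 != 0 by rewrite subr_eq0 gt_eqF ?pow4_gt1.
have P0 : 4 `^ beta != 0 by rewrite gt_eqF // (lt_trans ltr01 pow4_gt1).
have eps_q m : eps * q ^+ m.+1 = K * (q ^+ m - q ^+ m.+1).
  by rewrite exprS; field; rewrite P0 P1.
rewrite -(subrK (hyers_seq phi (n + k) x) (hyers_seq phi n x)) addnS -addrA.
apply: (le_trans (nrm_triangle _ _)).
have -> : K * (q ^+ n - q ^+ (n + k).+1) = K * (q ^+ n - q ^+ (n + k)) + eps * q ^+ (n + k).+1.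
  by rewrite eps_q; ring.
exact: lerD IHk (hyers_seq_step _ _).
Qed.

Lemma hyers_seq_dist n k x :
  nrm (hyers_seq phi n x - hyers_seq phi (n + k) x) <= K * q ^+ n.
Proof.
have eps_ge0 : 0 <= eps := le_trans (nrm_ge0 _) (phi_double 0).
have K_ge0 : 0 <= K by rewrite divr_ge0 // subr_ge0 ltW ?pow4_gt1.
apply: (le_trans (hyers_seq_telescope n k x)); rewrite ler_wpM2l //.
by rewrite lerBlDr lerDl exprn_ge0 ?(ltW q_gt0).
Qed.

Hypothesis nrm_complete : Fcomplete nrm.

Lemma hyers_seq_cvg x :
  exists v, (fun n => nrm (hyers_seq phi n x - v)) @ \oo --> 0.
Proof.
apply: nrm_complete => e e_gt0.
have /cvgrPdist_lt/(_ e e_gt0)[N _ KqN] := cvg_geometric_q K.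
exists N => m n Nm Nn; wlog nm : m n Nm Nn / (n <= m)%N.
  by move=> le_dist; case: (leqP n m) => [|/ltnW] nm; [|rewrite nrmBC]; apply: le_dist.
rewrite nrmBC -(subnKC nm); apply: (le_lt_trans (hyers_seq_dist _ _ _)).
by apply: le_lt_trans (KqN n Nn); rewrite sub0r normrN ler_norm.
Qed.

Lemma nrm_quad_defect_hyers_seq (M : R) n x y :
  (forall x y, nrm (quad_defect phi x y) <= M) ->
  nrm (quad_defect (hyers_seq phi n) x y) <= M * q ^+ n.
Proof.
move=> phi_quad; elim: n x y => [|n IHn] x y; first by rewrite expr0 mulr1.
rewrite quad_defect_hyers_seqS nrm_scale_quarterC exprS mulrCA.
by rewrite ler_wpM2l ?(ltW q_gt0).
Qed.

Variable h : X -> Y.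
Hypothesis hyers_seq_to_h : forall x, (fun n => nrm (hyers_seq phi n x - h x)) @ \oo --> 0.

Lemma hyers_limit_dist x : nrm (phi x - h x) <= K.
Proof.
apply: (ler_cvg0 (hyers_seq_to_h x)) => n.
rewrite -(subrK (hyers_seq phi n x) (phi x)) -addrA.
apply: (le_trans (nrm_triangle _ _)); rewrite lerD2r.
by have := hyers_seq_dist 0 n x; rewrite expr0 mulr1.
Qed.

Lemma hyers_limit_quadratic (M : R) :
  (forall x y, nrm (quad_defect phi x y) <= M) -> quadratic h.
Proof.
move=> phi_quad; apply/quadraticP => x y.
pose err z n := nrm (hyers_seq phi n z - h z).
have err_cvg : (fun n => M * q ^+ n +
    (err (x + y) n + err (x - y) n + err x n *+ 2 + err y n *+ 2)) @ \oo --> 0.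
  rewrite -[X in _ --> X]addr0; apply: cvgD; first exact: cvg_geometric_q.
  rewrite -[X in _ --> X]addr0 -[X in _ --> _ + X](mul0rn _ 2).
  apply: cvgD; last exact: cvgMn (hyers_seq_to_h y).
  rewrite -[X in _ --> X]addr0 -[X in _ --> _ + X](mul0rn _ 2).
  apply: cvgD; last exact: cvgMn (hyers_seq_to_h x).
  by rewrite -[X in _ --> X]addr0; apply: cvgD; apply: hyers_seq_to_h.
apply: (eq0_of_nrm_le_cvg0 err_cvg) => n.
rewrite -[quad_defect h x y](subKr (quad_defect (hyers_seq phi n) x y)) -quad_defectB.
apply: (le_trans (nrmB_le _ _)); apply: lerD; first exact: nrm_quad_defect_hyers_seq.
exact: nrm_quad_defect_le.
Qed.

End HyersSequence.

Theorem quadratic_stability (X : zmodType) (phi : X -> Y) (eps : R) :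
  Fcomplete nrm -> phi 0 = 0 ->
  (forall x y z, nrm (triple_defect phi x y z) <= eps) ->
  exists h : X -> Y,
    [/\ quadratic h,
        (forall x, nrm (phi x - h x) <= eps / (4 `^ beta - 1)) &
        (forall h' : X -> Y, quadratic h' ->
           (forall x, nrm (phi x - h' x) <= eps / (4 `^ beta - 1)) -> h' = h)].
Proof.
move=> nrm_complete phi0 phi_triple.
have phi_double x : nrm (phi (x + x) - phi x *+ 4) <= eps.
  by rewrite -triple_defect_x0x.
have [h hyers_seq_to_h] := choice (hyers_seq_cvg phi_double nrm_complete).
have h_quad : quadratic h.
  apply: (hyers_limit_quadratic hyers_seq_to_h (M := eps *+ 3)) => x y.
  exact: nrm_quad_defect_triple_le.
exists h; split=> [//| |h' h'_quad h'_dist]; first exact: hyers_limit_dist.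
apply/funext => x; apply/eqP; rewrite -subr_eq0; apply/eqP; move: x.
apply: (quadratic_bounded_eq0 (M := eps / (4 `^ beta - 1) *+ 2)).
  exact: quadraticB.
move=> x; rewrite -(subrK (phi x) (h' x)) -addrA mulr2n.
apply: (le_trans (nrm_triangle _ _)); rewrite nrmBC.
exact: lerD (h'_dist x) (hyers_limit_dist phi_double hyers_seq_to_h x).
Qed.

End BetaHomogeneousNorm.

Theorem corollary4p2 (R : realType) (X : lmodType R)
  (Y : lmodType (complex R)) (nrm : Y -> R) (beta : R)
  (hbeta : 0 < beta <= 1) (hY : beta_homogeneous_Banach nrm beta)
  (eps : R) (heps : 0 < eps) (phi : X -> Y) (phi0 : phi 0 = 0)
  (hphi : forall x y z : X,
     nrm (phi (x + y - z) + phi (x + z - y) + phi (y + z - x)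
          - phi (x - y) - phi (x - z) - phi (z - y)
          - phi x - phi y - phi z) <= eps) :
  exists h : X -> Y,
    [/\ quadratic h,
        (forall x, nrm (phi x - h x) <= eps / (4 `^ beta - 1)) &
        (forall h' : X -> Y, quadratic h' ->
           (forall x, nrm (phi x - h' x) <= eps / (4 `^ beta - 1)) -> h' = h)].
Proof.
case: hY => beta_gt0 [nrm_eq0 _ nrm_triangle _ _] nrm_complete nrm_hom.
exact: quadratic_stability.
Qed.
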